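(* Let $X$ and $Y$ be topological spaces. If $C(X)$ has the countable sup property and $Y$ is separable, then $C(X\times Y)$ has the countable sup property.
   Context: $C(Z)$ is the vector lattice of real-valued continuous functions on $Z$ with the pointwise order; $X\times Y$ has the product topology. A vector lattice has the countable sup property if every nonempty subset possessing a supremum contains a countable subset with the same supremum. *)

From HB Require Import structures.
From mathcomp Require Import all_boot all_order all_algebra.
From mathcomp Require Import all_classical all_reals all_analysis.
Set Implicit Arguments. Unset Strict Implicit. Unset Printing Implicit Defensive.
Import Order.TTheory GRing.Theory Num.Theory numFieldNormedType.Exports.
Local Open Scope classical_set_scope.
Local Open Scope ring_scope.

Definition Cspace (R : realType) (Z : topologicalType) : set (Z -> R) :=
  [set f : Z -> R | continuous f].

Definition is_sup_in_C (R : realType) (Z : topologicalType)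
    (S : set (Z -> R)) (g : Z -> R) : Prop :=
  [/\ continuous g,
      (forall f, S f -> forall z, f z <= g z) &
      (forall h : Z -> R, continuous h ->
         (forall f, S f -> forall z, f z <= h z) -> forall z, g z <= h z)].

Definition countable_sup_property (R : realType) (Z : topologicalType) : Prop :=
  forall (S : set (Z -> R)), S `<=` @Cspace R Z -> S !=set0 ->
  forall g : Z -> R, @is_sup_in_C R Z S g ->
  exists S' : set (Z -> R), [/\ S' `<=` S, countable S' & @is_sup_in_C R Z S' g].

Definition separable_space (Y : topologicalType) : Prop :=
  exists D : set Y, countable D /\ closure D = setT.

From mathcomp Require Import all_boot all_order all_algebra.
From mathcomp Require Import all_classical all_reals all_analysis.
From mathcomp Require Import lra.
Set Implicit Arguments. Unset Strict Implicit. Unset Printing Implicit Defensive.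
Import Order.TTheory GRing.Theory Num.Theory numFieldNormedType.Exports.
Local Open Scope classical_set_scope.
Local Open Scope ring_scope.

(* A continuous upper bound g of S is the supremum of S in C(Z) exactly when, on every
   nonempty cozero set W, members of S come within any e > 0 of g at some point of W.
   Fix a countable dense D in Y.  For y in D and n, let Q_(y,n) be the family of the
   functions x |-> f(x,y) - g(x,y) + 1/(n+1), f in S.  The continuous phi <= 1 whose
   cozero set lies in the cozero set of some member of Q_(y,n), or misses all of them,
   have supremum 1 in C(X); so countably many of them already do, and choosing one f
   for each phi of the first kind gives a countable subset S' of S.  If f in S is
   within 1/(n+1) of g at a point (x,y) of W, density moves y to some d in D, and
   approximating 1 by the countable family for (d,n) on
   {x' | (x',d) in W, f(x',d) > g(x',d) - 1/(n+1)} produces a phi of the first kind,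
   whose chosen f' is within 1/(n+1) of g at a point of W. *)

Section Cozero.
Variables (R : realType) (Z : topologicalType).
Implicit Types (k f g h : Z -> R) (S : set (Z -> R)).

Definition cozero k : set Z := [set z | 0 < k z].

Definition bump k z0 : Z -> R := fun z => Num.min 1 (Num.max (k z) 0 / k z0).

Lemma bump_continuous k z0 : continuous k -> continuous (bump k z0).
Proof.
move=> k_cont z.
have -> : bump k z0 = cst 1 \min ((k \max cst 0) \* cst (k z0)^-1) by [].
apply: continuous_min; first exact: cvg_cst.
by apply: continuousM; [apply: continuous_max; [exact: k_cont | exact: cvg_cst] | exact: cvg_cst].
Qed.

Lemma bump_le1 k z0 z : bump k z0 z <= 1.
Proof. by rewrite /bump ge_min lexx. Qed.

Lemma bump_center k z0 : 0 < k z0 -> bump k z0 z0 = 1.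
Proof. by move=> kz0; rewrite /bump max_l ?ltW // divff ?gt_eqF // minxx. Qed.

Lemma bump_eq0 k z0 z : k z <= 0 -> bump k z0 z = 0.
Proof. by move=> kz; rewrite /bump max_r // mul0r min_r // ler01. Qed.

Lemma cozero_bump k z0 : 0 < k z0 -> cozero (bump k z0) `<=` cozero k.
Proof.
move=> kz0 z; rewrite /cozero /bump /= lt_min => /andP[_].
by rewrite pmulr_lgt0 ?invr_gt0 // lt_max ltxx orbF.
Qed.

Definition approaches_from_below S g :=
  forall k, continuous k -> forall z0, 0 < k z0 -> forall e, 0 < e ->
  exists z f, [/\ cozero k z, S f & g z - e < f z].

(* Otherwise g - e * bump k z0 would be a smaller continuous upper bound. *)
Lemma is_sup_in_C_approaches S g : is_sup_in_C S g -> approaches_from_below S g.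
Proof.
move=> [g_cont g_ub g_least] k k_cont z0 kz0 e e_gt0.
apply: contrapT => /forallNP no_approx.
have far_below z f : cozero k z -> S f -> f z <= g z - e.
  by move=> kz Sf; rewrite leNgt; apply/negP => fz; apply: (no_approx z); exists f.
suff: g z0 <= g z0 - e * bump k z0 z0 by rewrite bump_center // mulr1; lra.
apply: (g_least (fun z => g z - e * bump k z0 z)) => [z|f Sf z].
  by apply: cvgB; [exact: g_cont | apply: cvgM; [exact: cvg_cst | exact: bump_continuous]].
have [kz|kz] := ltP 0 (k z); last by rewrite bump_eq0 // mulr0 subr0; exact: g_ub.
apply: (le_trans (far_below z f kz Sf)); rewrite lerD2l lerN2.
by rewrite -[leRHS]mulr1 ler_wpM2l ?bump_le1 // ltW.
Qed.

Lemma approaches_is_sup_in_C S g : continuous g ->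
  (forall f, S f -> forall z, f z <= g z) -> approaches_from_below S g ->
  is_sup_in_C S g.
Proof.
move=> g_cont g_ub g_approx; split=> // h h_cont h_ub z.
rewrite leNgt; apply/negP => hz; pose e := (g z - h z) / 2.
have k_cont : continuous (fun w => g w - h w - e).
  by move=> w; apply: cvgB; [apply: cvgB; [exact: g_cont | exact: h_cont] | exact: cvg_cst].
have e_gt0 : 0 < e by rewrite /e; lra.
have [|w [f [kw Sf fw]]] := g_approx _ k_cont z _ e e_gt0; first by rewrite /e; lra.
by move: kw (h_ub f Sf w) fw; rewrite /cozero /= /e; lra.
Qed.

Lemma dense_cozero (D : set Z) k z :
  closure D = setT -> continuous k -> cozero k z -> exists2 d, D d & cozero k d.
Proof.
move=> D_dense k_cont kz; have : closure D z by rewrite D_dense.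
by move=> /(_ _ (k_cont z _ (lt_nbhsr kz))) [d [Dd kd]]; exists d.
Qed.

End Cozero.

Section SubordinateBumps.
Variables (R : realType) (X : topologicalType) (Q : set (X -> R)).

Definition subordinate_bumps : set (X -> R) :=
  [set phi : X -> R | [/\ continuous phi, (forall x, phi x <= 1) &
    (exists2 q, Q q & cozero phi `<=` cozero q) \/
    (forall q, Q q -> cozero phi `&` cozero q = set0)]].

Lemma subordinate_bumps0 : subordinate_bumps (cst 0).
Proof.
split=> [x|x|]; [exact: cvg_cst | exact: ler01 |].
by right=> q _; apply/seteqP; split=> // x []; rewrite /cozero /= ltxx.
Qed.

Hypothesis Q_cont : forall q, Q q -> continuous q.

Lemma is_sup_in_C_subordinate_bumps : is_sup_in_C subordinate_bumps (cst 1).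
Proof.
apply: approaches_is_sup_in_C => [x|phi []//|k k_cont z0 kz0 e e_gt0].
  exact: cvg_cst.
have [[z [q [Qq qz kz]]]|disj] := pselect (exists z q, [/\ Q q, cozero q z & cozero k z]).
  exists z, (bump q z); split=> //; last by rewrite /= bump_center //; lra.
  split; [exact/bump_continuous/Q_cont | exact: bump_le1 |].
  by left; exists q => //; exact: cozero_bump.
exists z0, (bump k z0); split=> //; last by rewrite /= bump_center //; lra.
split; [exact: bump_continuous | exact: bump_le1 |].
right=> q Qq; apply/seteqP; split=> // x [/(cozero_bump kz0) kx qx].
by apply: disj; exists x, q.
Qed.

End SubordinateBumps.

Section Sections.
Variables (X Y T : topologicalType) (f : X * Y -> T).
Hypothesis f_cont : continuous f.

Lemma continuous_section1 y : continuous (fun x => f (x, y)).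
Proof.
move=> x; apply: (@continuous_comp _ _ _ (fun x => (x, y)) f); last exact: f_cont.
by apply: cvg_pair; [exact: cvg_id | exact: cvg_cst].
Qed.

Lemma continuous_section2 x : continuous (fun y => f (x, y)).
Proof.
move=> y; apply: (@continuous_comp _ _ _ (fun y => (x, y)) f); last exact: f_cont.
by apply: cvg_pair; [exact: cvg_cst | exact: cvg_id].
Qed.

End Sections.

Section ProductSup.
Variables (R : realType) (X Y : topologicalType).
Variables (S : set (X * Y -> R)) (g : X * Y -> R).
Hypotheses (S_cont : S `<=` @Cspace R (X * Y)%type) (g_sup : is_sup_in_C S g).

Definition gap (n : nat) (f : X * Y -> R) : X * Y -> R :=
  fun z => f z - g z + n.+1%:R^-1.

Definition section_gap (p : Y * nat) (f : X * Y -> R) : X -> R :=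
  fun x => gap p.2 f (x, p.1).

Lemma gap_continuous n f : S f -> continuous (gap n f).
Proof.
have [g_cont _ _] := g_sup.
move=> /S_cont f_cont z; apply: cvgD; last exact: cvg_cst.
by apply: cvgB; [exact: f_cont | exact: g_cont].
Qed.

Lemma gap_gt0 n f z : (0 < gap n f z) = (g z - n.+1%:R^-1 < f z).
Proof. by rewrite /gap addrAC subr_gt0 ltrBlDr. Qed.

Lemma section_gap_continuous p f : S f -> continuous (section_gap p f).
Proof. by move=> Sf; apply: continuous_section1; exact: gap_continuous. Qed.

Variables (f0 : X * Y -> R) (D : set Y) (F : Y * nat -> set (X -> R)).
Hypothesis Sf0 : S f0.

(* f0 is a default in S, used when phi lies in no cozero set of a section gap. *)
Definition subordinate_witness p (phi : X -> R) : X * Y -> R :=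
  xget f0 [set f | S f /\ cozero phi `<=` cozero (section_gap p f)].

Lemma subordinate_witness_mem p phi : S (subordinate_witness p phi).
Proof. by rewrite /subordinate_witness; case: xgetP => // f _ []. Qed.

Lemma cozero_subordinate_witness p phi f : S f ->
  cozero phi `<=` cozero (section_gap p f) ->
  cozero phi `<=` cozero (section_gap p (subordinate_witness p phi)).
Proof.
move=> Sf phi_sub; rewrite /subordinate_witness.
by case: xgetP => [_ _ []//|/(_ f)[]].
Qed.

Definition witness_family : set (X * Y -> R) :=
  \bigcup_(p in D `*` setT) subordinate_witness p @` F p.

Lemma witness_family_sub : witness_family `<=` S.
Proof. by move=> _ [p _ [phi _ <-]]; exact: subordinate_witness_mem. Qed.

Lemma countable_witness_family :
  countable D -> (forall p, countable (F p)) -> countable witness_family.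
Proof.
move=> D_count F_count; apply: bigcup_countable.
  exact: countableX D_count (countableP _).
by move=> p _; apply: sub_countable (card_image_le _ _) (F_count p).
Qed.

Hypotheses (F_sub : forall p, F p `<=` subordinate_bumps (section_gap p @` S))
  (F_sup : forall p, is_sup_in_C (F p) (cst 1)).

Lemma is_sup_in_C_witness_family : closure D = setT -> is_sup_in_C witness_family g.
Proof.
move=> D_dense; have [g_cont g_ub _] := g_sup.
apply: approaches_is_sup_in_C => // [f /witness_family_sub/g_ub //|k k_cont z0 kz0 e e_gt0].
have [n _ /(_ n (leqnn n)) ne] := near_infty_natSinv_lt (PosNum e_gt0).
have eps_gt0 : 0 < n.+1%:R^-1 :> R by rewrite invr_gt0.
have [[x y] [f [kxy Sf fxy]]] := is_sup_in_C_approaches g_sup k_cont kz0 eps_gt0.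
have [d Dd] : exists2 d, D d &
    cozero ((fun y' => k (x, y')) \min (fun y' => gap n f (x, y'))) d.
  apply: (dense_cozero (z := y)) => //; last by rewrite /cozero /= lt_min kxy gap_gt0.
  move=> y'; apply: continuous_min; apply: continuous_section2 => //.
  exact: gap_continuous.
rewrite /cozero /= lt_min => /andP[kxd fxd].
pose w := (fun x' => k (x', d)) \min section_gap (d, n) f.
have w_cont : continuous w.
  move=> x'; apply: continuous_min; first exact: continuous_section1.
  exact: section_gap_continuous.
have wx : 0 < w x by rewrite /w /= lt_min kxd fxd.
have [x' [phi [wx' Fphi phix']]] := is_sup_in_C_approaches (F_sup (d, n)) w_cont wx ltr01.
move: wx'; rewrite /cozero /w /= lt_min => /andP[kx' fx'].
have phix'_gt0 : cozero phi x' by rewrite /cozero -[0](subrr 1).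
have [_ _ [[_ [f1 Sf1 <-] phi_sub]|phi_disj]] := F_sub Fphi; last first.
  have : (cozero phi `&` cozero (section_gap (d, n) f)) x' by [].
  by rewrite phi_disj //; exists f.
exists (x', d), (subordinate_witness (d, n) phi); split => //.
  by exists (d, n) => //; exists phi.
have := cozero_subordinate_witness Sf1 phi_sub phix'_gt0.
rewrite /cozero /section_gap /= gap_gt0 => /(le_lt_trans _); apply.
by rewrite lerD2l lerN2 ltW.
Qed.

End ProductSup.

Theorem corollary6p3 (R : realType) (X Y : topologicalType) :
  countable_sup_property R X -> separable_space Y ->
  countable_sup_property R (X * Y)%type.
Proof.
move=> hX [D [D_count D_dense]] S S_cont [f0 Sf0] g g_sup.
have F_ex p : exists F, [/\ F `<=` subordinate_bumps (section_gap g p @` S),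
                          countable F & is_sup_in_C F (cst 1)].
  apply: hX; [by move=> phi [] | by exists (cst 0); exact: subordinate_bumps0 |].
  apply: is_sup_in_C_subordinate_bumps => _ [f Sf <-].
  exact: section_gap_continuous S_cont g_sup _ _ Sf.
have [F /all_and3[F_sub F_count F_sup]] := choice F_ex.
exists (witness_family S g f0 D F); split.
- exact: witness_family_sub.
- exact: countable_witness_family.
- exact: is_sup_in_C_witness_family.
Qed.
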